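(* Let $H,K,A_1,\ldots,A_n$ be groups such that $H\times K$ is a finite-index subgroup of $A_1\times\cdots\times A_n$. If $A_1,\ldots,A_n$ have almost stable centralisers and if $H$ is a non-cyclic group admitting an IMC generating set, then there exists an index $1\le i\le n$ such that $$H\leq \mathrm{VZ}(A_1)\times\cdots\times\mathrm{VZ}(A_{i-1})\times A_i\times\mathrm{VZ}(A_{i+1})\times\cdots\times\mathrm{VZ}(A_n).$$
   Context: A group $G$ has almost stable centralisers if for all $g\in G$ and $k\ge1$, the centraliser $C(g)$ has finite index in $C(g^k)$. A subset $S\subset G$ is an IMC generating set if it generates $G$ and satisfies: (Independence) for all distinct $s_1,s_2\in S$ and all integers $p,q\ge1$, $[s_1^p,s_2^q]\ne1$; (Maximal Centralisers) for all $s\in S$ and $g\in G$, if $C(s)\subsetneq C(g)$ then $g=1$. The virtual centre $\mathrm{VZ}(G)$ is the set of elements of $G$ centralising some finite-index subgroup of $G$. *)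

From Stdlib Require Import List FunctionalExtensionality.
From mathcomp Require Import all_boot.

Set Implicit Arguments.
Unset Strict Implicit.
Unset Printing Implicit Defensive.

Record AGroup := MkAGroup {
  gcar :> Type;
  gmul : gcar -> gcar -> gcar;
  gone : gcar;
  ginv : gcar -> gcar;
  gmulA : forall x y z, gmul x (gmul y z) = gmul (gmul x y) z;
  gmul1 : forall x, gmul gone x = x;
  gmulV : forall x, gmul (ginv x) x = gone
}.

Arguments gmul {a} : rename.
Arguments gone {a} : rename.
Arguments ginv {a} : rename.

Section GroupDefs.
Variable G : AGroup.

Fixpoint gpow (x : G) (k : nat) : G :=
  match k with O => gone | S k' => gmul x (gpow x k') end.

Definition gcommute (x y : G) : Prop := gmul x y = gmul y x.

Definition is_subgroup (S : G -> Prop) : Prop :=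
  S gone /\ (forall x y, S x -> S y -> S (gmul x y)) /\ (forall x, S x -> S (ginv x)).

Definition whole : G -> Prop := fun _ => True.

Definition finite_index (T S : G -> Prop) : Prop :=
  (forall x, T x -> S x) /\
  exists l : list G, (forall y, In y l -> S y) /\
    forall x, S x -> exists y, In y l /\ T (gmul (ginv y) x).

Definition centraliser_in (S : G -> Prop) (g : G) : G -> Prop :=
  fun x => S x /\ gcommute x g.

Definition centraliser (g : G) : G -> Prop := centraliser_in whole g.

Definition almost_stable_centralisers : Prop :=
  forall (g : G) (k : nat), 1 <= k ->
    finite_index (centraliser g) (centraliser (gpow g k)).

Definition virtual_centre (g : G) : Prop :=
  exists T : G -> Prop, is_subgroup T /\ finite_index T whole /\
    forall t, T t -> gcommute g t.

Definition generated (X : G -> Prop) (x : G) : Prop :=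
  forall T, is_subgroup T -> (forall y, X y -> T y) -> T x.

(* integer powers g^z, z in Z, written as g^k or (g^k)^-1 with k : nat *)
Definition cyclic_subgroup (S : G -> Prop) : Prop :=
  exists g, S g /\ forall x, S x -> exists k : nat, x = gpow g k \/ x = ginv (gpow g k).

Definition strict_subset (P Q : G -> Prop) : Prop :=
  (forall x, P x -> Q x) /\ exists x, Q x /\ ~ P x.

Definition IMC_generating_set (S X : G -> Prop) : Prop :=
  (forall x, X x -> S x) /\
  (forall x, S x -> generated X x) /\
  (forall s1 s2, X s1 -> X s2 -> s1 <> s2 ->
     forall p q : nat, 1 <= p -> 1 <= q -> ~ gcommute (gpow s1 p) (gpow s2 q)) /\
  (forall s g, X s -> S g ->
     strict_subset (centraliser_in S s) (centraliser_in S g) -> g = gone).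

Definition internal_direct_product (S T : G -> Prop) : Prop :=
  is_subgroup S /\ is_subgroup T /\
  (forall s t, S s -> T t -> gcommute s t) /\
  (forall x, S x -> T x -> x = gone).

Definition prod_set (S T : G -> Prop) : G -> Prop :=
  fun x => exists s t, S s /\ T t /\ x = gmul s t.

End GroupDefs.

Section Product.
Variables (n : nat) (A : 'I_n -> AGroup).

Definition pcar := forall i : 'I_n, A i.
Definition pmul (x y : pcar) : pcar := fun i => gmul (x i) (y i).
Definition pone : pcar := fun i => gone.
Definition pinv (x : pcar) : pcar := fun i => ginv (x i).

Lemma pmulA x y z : pmul x (pmul y z) = pmul (pmul x y) z.
Proof. apply functional_extensionality_dep => i; exact: gmulA. Qed.
Lemma pmul1 x : pmul pone x = x.
Proof. apply functional_extensionality_dep => i; exact: gmul1. Qed.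
Lemma pmulV x : pmul (pinv x) x = pone.
Proof. apply functional_extensionality_dep => i; exact: gmulV. Qed.

Definition prodGroup : AGroup := MkAGroup pmulA pmul1 pmulV.
End Product.

From Stdlib Require Import Classical ClassicalEpsilon FunctionalExtensionality List.
From mathcomp Require Import all_boot.

Set Implicit Arguments.
Unset Strict Implicit.
Unset Printing Implicit Defensive.

(* Call [j] a bad coordinate of [u] when no positive power of [u] restricted
   to its [j]-th coordinate lies in [K].  At a good coordinate of [u] in [H],
   some [u_j^k] is centralised by the [j]-th coordinates of the finite-index
   subgroup [H K], so [C(u_j^k)] has finite index in [A_j], and so does
   [C(u_j)] by almost stability: [u_j] is virtually central.
   Every IMC generator [u] has a bad coordinate, otherwise a power of [u]
   lies in [H /\ K = 1], against independence ([H] being non-cyclic has two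
   generators).  If generators [u <> v] had bad coordinates [i <> j], the
   restrictions of [u] to [i] and of [v] to [j] commute; writing powers of
   them as [h c] and [h' c'] in [H K] with [h, h' <> 1], [h] and [h'] commute,
   and maximality of centralisers gives [C_H(u) = C_H(h)] and
   [C_H(v) = C_H(h')], so [u] and [v] commute, against independence.  Hence
   all bad coordinates are one index [i], and off [i] the generators, hence
   all of [H], have virtually central coordinates. *)

Section GroupTheory.
Variable G : AGroup.
Implicit Types x y z : G.

Lemma mulgV x : gmul x (ginv x) = gone.
Proof.
have -> : gmul x (ginv x) = gmul (gmul (ginv (ginv x)) (ginv x)) (gmul x (ginv x)).
  by rewrite gmulV gmul1.
by rewrite -gmulA (gmulA (ginv x) x) gmulV gmul1 gmulV.
Qed.

Lemma mulg1 x : gmul x gone = x.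
Proof. by rewrite -(gmulV x) gmulA mulgV gmul1. Qed.

Lemma mulKg x y : gmul (ginv x) (gmul x y) = y.
Proof. by rewrite gmulA gmulV gmul1. Qed.

Lemma mulKVg x y : gmul x (gmul (ginv x) y) = y.
Proof. by rewrite gmulA mulgV gmul1. Qed.

Lemma mulgK x y : gmul (gmul y x) (ginv x) = y.
Proof. by rewrite -gmulA mulgV mulg1. Qed.

Lemma mulgI x y z : gmul x y = gmul x z -> y = z.
Proof. by move=> e; rewrite -(mulKg x y) e mulKg. Qed.

Lemma mulIg x y z : gmul y x = gmul z x -> y = z.
Proof. by move=> e; rewrite -(mulgK x y) e mulgK. Qed.

Lemma invgK x : ginv (ginv x) = x.
Proof. by apply: (@mulgI (ginv x)); rewrite mulgV gmulV. Qed.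

Lemma invMg x y : ginv (gmul x y) = gmul (ginv y) (ginv x).
Proof. by apply: (@mulgI (gmul x y)); rewrite mulgV -gmulA mulKVg mulgV. Qed.

Lemma gcommute_sym x y : gcommute x y -> gcommute y x.
Proof. by []. Qed.

Lemma gcommute1 x : gcommute x gone.
Proof. by rewrite /gcommute gmul1 mulg1. Qed.

Lemma gcommuteV x y : gcommute x y -> gcommute x (ginv y).
Proof. by move=> cxy; apply: (@mulgI y); rewrite gmulA -cxy mulgK mulKVg. Qed.

Lemma gcommuteM x y z : gcommute x y -> gcommute x z -> gcommute x (gmul y z).
Proof. by move=> cxy cxz; rewrite /gcommute gmulA cxy -gmulA cxz gmulA. Qed.

Lemma gpowD x a b : gpow x (a + b) = gmul (gpow x a) (gpow x b).
Proof. by elim: a => [|a IH] /=; rewrite ?gmul1 // IH gmulA. Qed.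

Lemma gpowM x a b : gpow x (a * b) = gpow (gpow x a) b.
Proof. by elim: b => [|b IH] /=; rewrite ?muln0 // mulnS gpowD IH. Qed.

Lemma gpow1g a : gpow (gone : G) a = gone.
Proof. by elim: a => [|a IH] //=; rewrite IH gmul1. Qed.

Lemma gpow1 x : gpow x 1 = x.
Proof. exact: mulg1. Qed.

Lemma gcommuteX x y a : gcommute x y -> gcommute x (gpow y a).
Proof.
by move=> cxy; elim: a => [|a IH] /=; [exact: gcommute1 | exact: gcommuteM].
Qed.

Lemma gcommuteX2 x y a b : gcommute x y -> gcommute (gpow x a) (gpow y b).
Proof. by move=> cxy; apply/gcommuteX/gcommute_sym/gcommuteX. Qed.

Lemma gpowMn x y a : gcommute x y -> gpow (gmul x y) a = gmul (gpow x a) (gpow y a).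
Proof.
move=> cxy; elim: a => [|a IH] /=; first by rewrite gmul1.
by rewrite IH -!gmulA (gmulA y) (gcommuteX a (gcommute_sym cxy)) -gmulA.
Qed.

Lemma subgroup_gpow (S : G -> Prop) x a : is_subgroup S -> S x -> S (gpow x a).
Proof. by case=> S1 [SM _] Sx; elim: a => [|a IH] //=; exact: SM. Qed.

Lemma centraliser_subgroup (g : G) : is_subgroup (centraliser g).
Proof.
split; [|split].
- by split=> //; apply/gcommute_sym/gcommute1.
- by move=> x y [_ cx] [_ cy]; split=> //; apply/gcommute_sym/gcommuteM.
- by move=> x [_ cx]; split=> //; apply/gcommute_sym/gcommuteV.
Qed.

End GroupTheory.

Lemma pigeonhole m (f : nat -> nat) : (forall p, p <= m -> f p < m) ->
  exists p q, p < q <= m /\ f p = f q.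
Proof.
move=> f_lt; apply: NNPP => no_collision.
have f_inj : {in iota 0 m.+1 &, injective f}.
  move=> p q; rewrite !mem_iota !add0n => p_le q_le fpq.
  case: (ltngtP p q) => // lt_pq; case: no_collision.
    by exists p, q; rewrite lt_pq -ltnS q_le.
  by exists q, p; rewrite lt_pq -ltnS p_le.
have f_uniq : uniq (map f (iota 0 m.+1)) by rewrite (map_inj_in_uniq f_inj) iota_uniq.
have f_sub : {subset map f (iota 0 m.+1) <= iota 0 m}.
  move=> y /mapP [p]; rewrite mem_iota add0n => p_le ->.
  by rewrite mem_iota add0n f_lt // -ltnS.
by have := uniq_leq_size f_uniq f_sub; rewrite size_map !size_iota ltnn.
Qed.

Section FiniteIndex.
Variable G : AGroup.
Implicit Types (x y : G) (T S : G -> Prop).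

Definition power_in T x := exists k, 0 < k /\ T (gpow x k).

Lemma power_inM T x y : is_subgroup T -> gcommute x y ->
  power_in T x -> power_in T y -> power_in T (gmul x y).
Proof.
move=> sT cxy [a [a_gt0 Txa]] [b [b_gt0 Tyb]].
exists (a * b); split; first by rewrite muln_gt0 a_gt0.
have [_ [TM _]] := sT; rewrite gpowMn // gpowM mulnC gpowM.
by apply: TM; apply: subgroup_gpow.
Qed.

Lemma finite_index_trans T S :
  finite_index T S -> finite_index S (@whole G) -> finite_index T (@whole G).
Proof.
move=> [TS [l1 [_ cover1]]] [_ [l2 [_ cover2]]]; split=> //.
exists (flat_map (fun y2 => map (gmul y2) l1) l2); split=> // x _.
have [y2 [y2l Sy]] := cover2 x I.
have [y1 [y1l Ty]] := cover1 _ Sy.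
exists (gmul y2 y1); split; last by rewrite invMg -gmulA.
by apply/in_flat_map; exists y2; split=> //; apply: in_map.
Qed.

(* With [m] cosets, two of the powers [x^0, ..., x^m] lie in the same one. *)
Lemma finite_index_power_in T x :
  is_subgroup T -> finite_index T (@whole G) -> power_in T x.
Proof.
move=> [_ [TM TV]] [_ [l [_ cover]]].
have coset p : exists i, i < size l /\ T (gmul (ginv (List.nth i l gone)) (gpow x p)).
  have [y [yl Ty]] := cover (gpow x p) I.
  have [i [il ey]] := In_nth l y gone yl.
  by exists i; rewrite ey; split=> //; apply/ltP.
pose f p := proj1_sig (constructive_indefinite_description _ (coset p)).
have fP p : f p < size l /\ T (gmul (ginv (List.nth (f p) l gone)) (gpow x p)).
  exact: proj2_sig (constructive_indefinite_description _ (coset p)).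
have [p [q [/andP [pq _] fpq]]] := pigeonhole (fun p _ => proj1 (fP p)).
exists (q - p); split; first by rewrite subn_gt0.
have := TM _ _ (TV _ (proj2 (fP p))) (proj2 (fP q)).
by rewrite fpq invMg invgK -gmulA mulKVg -{1}(subnKC (ltnW pq)) gpowD mulKg.
Qed.

Lemma list_of_witnesses (Qs : list (G -> Prop)) :
  exists l, forall Q, In Q Qs -> (exists x, Q x) -> exists z, In z l /\ Q z.
Proof.
elim: Qs => [|Q Qs [l IH]]; first by exists nil.
case: (classic (exists x, Q x)) => [[x Qx]|noQ].
- exists (x :: l) => Q' [<-|Q'Qs] exQ'; first by exists x; split=> //; left.
  by have [z [zl Qz]] := IH Q' Q'Qs exQ'; exists z; split=> //; right.
- by exists l => Q' [<-|Q'Qs] //; exact: IH.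
Qed.

(* One representative of each nonempty intersection of a coset of [T1] with
   a coset of [T2] suffices. *)
Lemma finite_index_meet T1 T2 :
  is_subgroup T1 -> is_subgroup T2 ->
  finite_index T1 (@whole G) -> finite_index T2 (@whole G) ->
  finite_index (fun x => T1 x /\ T2 x) (@whole G).
Proof.
move=> [_ [M1 V1]] [_ [M2 V2]] [_ [l1 [_ cover1]]] [_ [l2 [_ cover2]]].
split=> //.
pose cosets y1 y2 x := T1 (gmul (ginv y1) x) /\ T2 (gmul (ginv y2) x).
have [l witness] :=
  list_of_witnesses (flat_map (fun y1 => map (cosets y1) l2) l1).
exists l; split=> // x _.
have [y1 [y1l T1x]] := cover1 x I.
have [y2 [y2l T2x]] := cover2 x I.
have in_cosets : In (cosets y1 y2) (flat_map (fun y1 => map (cosets y1) l2) l1).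
  by apply/in_flat_map; exists y1; split=> //; apply: in_map.
have [z [zl [T1z T2z]]] := witness _ in_cosets (ex_intro _ x (conj T1x T2x)).
exists z; split=> //.
have shift y : gmul (ginv z) x = gmul (ginv (gmul (ginv y) z)) (gmul (ginv y) x).
  by rewrite invMg invgK -gmulA mulKVg.
by split; [rewrite (shift y1); apply: M1 (V1 _ T1z) T1x
          | rewrite (shift y2); apply: M2 (V2 _ T2z) T2x].
Qed.

Lemma virtual_centre_subgroup : is_subgroup (@virtual_centre G).
Proof.
split; [|split].
- exists (@whole G); split; first by [].
  split; last by move=> t _; apply/gcommute_sym/gcommute1.
  by split=> //; exists (gone :: nil); split=> // x _; exists gone; split; [left|].
- move=> x y [T1 [sT1 [fT1 cT1]]] [T2 [sT2 [fT2 cT2]]].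
  exists (fun t => T1 t /\ T2 t); split; [|split].
  + case: sT1 => [T1_1 [M1 V1]]; case: sT2 => [T2_1 [M2 V2]].
    split=> //; split=> [a b [? ?] [? ?]|a [? ?]]; split; auto.
  + exact: finite_index_meet.
  + by move=> t [T1t T2t]; apply/gcommute_sym/gcommuteM; apply: gcommute_sym; auto.
- move=> x [T [sT [fT cT]]]; exists T; do 2!split=> //.
  by move=> t Tt; apply/gcommute_sym/gcommuteV/gcommute_sym/cT.
Qed.

Lemma virtual_centre_of_finite_index g :
  finite_index (centraliser g) (@whole G) -> virtual_centre g.
Proof.
move=> fC; exists (centraliser g); split; first exact: centraliser_subgroup.
by split=> // t [_ ctg]; apply: gcommute_sym.
Qed.

End FiniteIndex.

Section Cyclic.
Variable G : AGroup.

Definition int_powers (s x : G) : Prop :=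
  exists k, x = gpow s k \/ x = ginv (gpow s k).

Lemma int_powers_subgroup (s : G) : is_subgroup (int_powers s).
Proof.
split; first by exists 0; left.
split.
- move=> x y [a [->|->]] [b [->|->]].
  + by exists (a + b); left; rewrite gpowD.
  + case: (leqP b a) => ba.
      by exists (a - b); left; rewrite -{1}(subnK ba) gpowD mulgK.
    by exists (b - a); right; rewrite -{1}(subnK (ltnW ba)) gpowD invMg mulKVg.
  + case: (leqP a b) => ab.
      by exists (b - a); left; rewrite -{1}(subnKC ab) gpowD mulKg.
    exists (a - b); right.
    by rewrite -{1}(subnKC (ltnW ab)) gpowD invMg -gmulA gmulV mulg1.
  + by exists (b + a); right; rewrite gpowD invMg.
- by move=> x [a [->|->]]; exists a; [right | left; rewrite invgK].
Qed.

Lemma two_generators (S X : G -> Prop) :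
  is_subgroup S -> (forall x, X x -> S x) -> ~ cyclic_subgroup S ->
  (forall x, S x -> generated X x) -> exists s t, X s /\ X t /\ s <> t.
Proof.
move=> [S1 _] XS not_cyclic gen; apply: NNPP => not_two; apply: not_cyclic.
have [s [Ss Xs]] : exists s, S s /\ forall x, X x -> x = s.
  case: (classic (exists s, X s)) => [[s Xs]|noX].
    exists s; split; first exact: XS.
    by move=> x Xx; apply: NNPP => xs; apply: not_two; exists x, s.
  by exists gone; split=> // x Xx; case: noX; exists x.
exists s; split=> // x Sx; apply: (gen x Sx _ (int_powers_subgroup s)).
by move=> y /Xs ->; exists 1; left; rewrite gpow1.
Qed.

End Cyclic.

Section DirectProduct.
Variables (G : AGroup) (H K : G -> Prop).
Hypothesis HK : internal_direct_product H K.

Lemma prod_set_subgroup : is_subgroup (prod_set H K).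
Proof.
have [[H1 [HM HV]] [[K1 [KM KV]] [cHK _]]] := HK.
split; [|split].
- by exists gone, gone; rewrite gmul1.
- move=> _ _ [h1 [c1 [Hh1 [Kc1 ->]]]] [h2 [c2 [Hh2 [Kc2 ->]]]].
  exists (gmul h1 h2), (gmul c1 c2); split; first exact: HM.
  split; first exact: KM.
  by rewrite -!gmulA (gmulA c1) -(cHK _ _ Hh2 Kc1) -gmulA.
- move=> _ [h [c [Hh [Kc ->]]]].
  exists (ginv h), (ginv c); split; first exact: HV.
  split; first exact: KV.
  by rewrite invMg (cHK _ _ (HV _ Hh) (KV _ Kc)).
Qed.

Lemma prod_set_inj h1 c1 h2 c2 : H h1 -> K c1 -> H h2 -> K c2 ->
  gmul h1 c1 = gmul h2 c2 -> h1 = h2 /\ c1 = c2.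
Proof.
have [[_ [HM HV]] [[_ [KM KV]] [_ HK1]]] := HK.
move=> Hh1 Kc1 Hh2 Kc2 e.
have e2 : gmul c2 (ginv c1) = gmul (ginv h2) h1.
  by rewrite -(mulKg h2 c2) -e gmulA mulgK.
have h21 : gmul (ginv h2) h1 = gone.
  by apply: HK1; [apply: HM (HV _ Hh2) Hh1 | rewrite -e2; apply: KM Kc2 (KV _ Kc1)].
have h12 : h1 = h2 by rewrite -(mulKVg h2 h1) h21 mulg1.
by split=> //; subst h2; exact: mulgI e.
Qed.

Lemma gcommute_H_parts h c h' c' : H h -> K c -> H h' -> K c' ->
  gcommute (gmul h c) (gmul h' c') -> gcommute h h'.
Proof.
have [[_ [HM _]] [[_ [KM _]] [cHK _]]] := HK.
move=> Hh Kc Hh' Kc'; rewrite /gcommute.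
have -> : gmul (gmul h c) (gmul h' c') = gmul (gmul h h') (gmul c c').
  by rewrite -!gmulA (gmulA c) -(cHK _ _ Hh' Kc) -gmulA.
have -> : gmul (gmul h' c') (gmul h c) = gmul (gmul h' h) (gmul c' c).
  by rewrite -!gmulA (gmulA c') -(cHK _ _ Hh Kc') -gmulA.
move=> e.
by case: (prod_set_inj (HM _ _ Hh Hh') (KM _ _ Kc Kc') (HM _ _ Hh' Hh) (KM _ _ Kc' Kc) e).
Qed.

End DirectProduct.

Section Product.
Variables (n : nat) (A : 'I_n -> AGroup).
Local Notation P := (prodGroup A).
Implicit Types (x y u v : P) (p q : pred 'I_n).

Lemma gmul_coord x y j : gmul x y j = gmul (x j) (y j).
Proof. by []. Qed.

Lemma gpow_coord x k j : gpow x k j = gpow (x j) k.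
Proof. by elim: k => //= k <-. Qed.

Lemma gcommute_coord x y j : gcommute x y -> gcommute (x j) (y j).
Proof. by move=> cxy; rewrite /gcommute -!gmul_coord cxy. Qed.

Definition restrict p u : P := fun j => if p j then u j else gone.

Definition single j u : P := restrict (fun l => l == j) u.

Lemma gcommute_restrict p x u : gcommute x u -> gcommute x (restrict p u).
Proof.
move=> cxu; apply: functional_extensionality_dep => j; rewrite !gmul_coord /restrict.
by case: (p j); [exact: gcommute_coord | rewrite mulg1 gmul1].
Qed.

Lemma gcommute_restrict2 p q u v :
  (forall j, p j -> q j -> gcommute (u j) (v j)) ->
  gcommute (restrict p u) (restrict q v).
Proof.
move=> cuv; apply: functional_extensionality_dep => j; rewrite !gmul_coord /restrict.
by case pj: (p j); case qj: (q j); rewrite ?mulg1 ?gmul1 //; apply: cuv.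
Qed.

Lemma power_in_of_single (K : P -> Prop) u : is_subgroup K ->
  (forall j, power_in K (single j u)) -> power_in K u.
Proof.
move=> sK single_in.
have restrict_in L : uniq L -> power_in K (restrict (fun l => l \in L) u).
  elim: L => [_ | i L IH /= /andP [iL uL]].
    exists 1; split=> //; rewrite gpow1.
    have -> : restrict (fun l => l \in [::]) u = gone.
      by apply: functional_extensionality_dep => l; rewrite /restrict in_nil.
    by case: sK.
  have -> : restrict (fun l => l \in i :: L) u =
            gmul (single i u) (restrict (fun l => l \in L) u).
    apply: functional_extensionality_dep => l.
    rewrite gmul_coord /single /restrict in_cons.
    by case: eqP => [->|_]; rewrite ?(negbTE iL) ?mulg1 ?gmul1.
  apply: power_inM => //; last exact: IH.
  by apply: gcommute_restrict2 => l /eqP ->; rewrite (negbTE iL).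
have := restrict_in _ (enum_uniq 'I_n).
have -> // : restrict (fun l => l \in enum 'I_n) u = u.
by apply: functional_extensionality_dep => l; rewrite /restrict mem_enum.
Qed.

Definition embed j (a : A j) : P := fun l =>
  match j =P l with ReflectT e => eq_rect j A a l e | ReflectF _ => gone end.

Lemma embed_coord j (a : A j) : embed a j = a.
Proof. by rewrite /embed; case: (j =P j) => // e; rewrite (eq_irrelevance e erefl). Qed.

Lemma finite_index_coord j (T : P -> Prop) (S : A j -> Prop) :
  finite_index T (@whole P) -> (forall x, T x -> S (x j)) ->
  finite_index S (@whole (A j)).
Proof.
move=> [_ [l [_ cover]]] TS; split=> //.
exists (map (fun y : P => y j) l); split=> // a _.
have [y [yl Ty]] := cover (embed a) I.
exists (y j); split; first exact: (in_map (fun y : P => y j)).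
by have := TS _ Ty; rewrite gmul_coord embed_coord.
Qed.

Lemma coord_subgroup j (S : A j -> Prop) :
  is_subgroup S -> is_subgroup (fun x : P => S (x j)).
Proof. by case=> S1 [SM SV]; split; [|split] => // x *; [apply: SM | apply: SV]. Qed.

End Product.

Section VirtuallyCentralCoordinates.
Variables (n : nat) (A : 'I_n -> AGroup) (H K : prodGroup A -> Prop).
Local Notation P := (prodGroup A).
Hypothesis HK : internal_direct_product H K.
Hypothesis HK_finite_index : finite_index (prod_set H K) (@whole P).

(* With [c := (single j u)^k] in [K], every element [h c'] of [H K] has its
   [j]-th coordinate commuting with [u_j^k]: [h] commutes with [c], and [c']
   with [u]. *)
Lemma virtual_centre_coord u j : almost_stable_centralisers (A j) ->
  H u -> power_in K (single j u) -> virtual_centre (u j).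
Proof.
have [_ [_ [cHK _]]] := HK.
move=> asc Hu [k [k_gt0 Kc]].
have cj : gpow (single j u) k j = gpow (u j) k.
  by rewrite gpow_coord /single /restrict eqxx.
apply/virtual_centre_of_finite_index/(finite_index_trans (asc (u j) k k_gt0)).
apply: finite_index_coord HK_finite_index _ => _ [h [c [Hh [Kc' ->]]]].
split=> //; rewrite gmul_coord; apply/gcommute_sym/gcommuteM.
- by rewrite -cj; apply/gcommute_sym/gcommute_coord/cHK.
- by apply/gcommute_sym/gcommuteX/gcommute_sym/gcommute_coord/cHK.
Qed.

Variable X : P -> Prop.
Hypothesis XH : forall x, X x -> H x.
Hypothesis X_indep : forall s1 s2, X s1 -> X s2 -> s1 <> s2 ->
  forall p q : nat, 1 <= p -> 1 <= q -> ~ gcommute (gpow s1 p) (gpow s2 q).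
Hypothesis X_maxc : forall s g, X s -> H g ->
  strict_subset (centraliser_in H s) (centraliser_in H g) -> g = gone.

Lemma virtual_centre_coord_of_generators j : almost_stable_centralisers (A j) ->
  (forall x, H x -> generated X x) ->
  (forall v, X v -> power_in K (single j v)) ->
  forall h, H h -> virtual_centre (h j).
Proof.
move=> asc X_gen good h Hh.
apply: (X_gen _ Hh _ (coord_subgroup (virtual_centre_subgroup (A j)))) => v Xv /=.
exact: virtual_centre_coord asc (XH Xv) (good _ Xv).
Qed.

Lemma bad_coordinate_exists w u : X w -> X u -> w <> u ->
  exists j, ~ power_in K (single j w).
Proof.
move=> Xw Xu wu; apply: NNPP => all_good.
have [sH [sK [_ HK1]]] := HK.
have [k [k_gt0 Kwk]] : power_in K w.
  by apply: power_in_of_single sK _ => j; apply: NNPP => bad; apply: all_good; exists j.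
have wk1 : gpow w k = gone := HK1 _ (subgroup_gpow k sH (XH Xw)) Kwk.
apply: (X_indep Xw Xu wu (p:=k) (q:=1)) => //.
by rewrite wk1; apply/gcommute_sym/gcommute1.
Qed.

(* [C_H(u)] is contained in [C_H(h)]; maximality of [C_H(u)] turns this into
   an equality because [h <> 1]. *)
Lemma centraliser_H_part u i a h c : X u -> H h -> K c -> h <> gone ->
  gpow (single i u) a = gmul h c ->
  forall x, H x -> gcommute x u <-> gcommute x h.
Proof.
have [_ [_ [cHK _]]] := HK.
move=> Xu Hh Kc h_ne1 E.
have sub x : H x -> gcommute x u -> gcommute x h.
  move=> Hx cxu.
  have : gcommute x (gpow (single i u) a) by apply/gcommuteX/gcommute_restrict.
  rewrite E /gcommute => cxhc; apply: (@mulIg _ c).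
  by rewrite -gmulA cxhc -gmulA -(cHK _ _ Hx Kc) gmulA.
move=> x Hx; split; first exact: sub.
move=> cxh; apply: NNPP => ncxu; apply: h_ne1; apply: (X_maxc Xu Hh).
split; first by move=> y [Hy cyu]; split; last exact: sub.
by exists x; split=> // [[_ ?]].
Qed.

Lemma bad_coordinates_eq u v i j : X u -> X v -> u <> v ->
  ~ power_in K (single i u) -> ~ power_in K (single j v) -> i = j.
Proof.
move=> Xu Xv uv bad_u bad_v; apply: NNPP => ij.
have HK_power x := finite_index_power_in x (prod_set_subgroup HK) HK_finite_index.
have [a [a_gt0 [h [c [Hh [Kc Ea]]]]]] := HK_power (single i u).
have [b [b_gt0 [h' [c' [Hh' [Kc' Eb]]]]]] := HK_power (single j v).
have h_ne1 : h <> gone by move=> h1; apply: bad_u; exists a; rewrite Ea h1 gmul1.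
have h'_ne1 : h' <> gone by move=> h1; apply: bad_v; exists b; rewrite Eb h1 gmul1.
have c_single : gcommute (single i u) (single j v).
  by apply: gcommute_restrict2 => l /eqP -> /eqP.
have chh' : gcommute h h'.
  by apply: (gcommute_H_parts HK Hh Kc Hh' Kc'); rewrite -Ea -Eb; apply: gcommuteX2.
have ch'u : gcommute h' u.
  exact/(centraliser_H_part Xu Hh Kc h_ne1 Ea Hh')/gcommute_sym.
have cuv : gcommute u v.
  exact/(centraliser_H_part Xv Hh' Kc' h'_ne1 Eb (XH Xu))/gcommute_sym.
by apply: (X_indep Xu Xv uv (p:=1) (q:=1)) => //; rewrite !gpow1.
Qed.

Hypothesis X_two : exists s t, X s /\ X t /\ s <> t.

Lemma bad_coordinate_unique u v i j : X u -> X v ->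
  ~ power_in K (single i u) -> ~ power_in K (single j v) -> i = j.
Proof.
move=> Xu Xv bad_u bad_v.
case: (classic (u = v)) => [vu | uv]; last exact: bad_coordinates_eq Xu Xv uv bad_u bad_v.
subst v.
have [w [Xw wu]] : exists w, X w /\ w <> u.
  have [s [t [Xs [Xt st]]]] := X_two.
  case: (classic (s = u)) => [su|su]; last by exists s.
  by exists t; split=> //; rewrite -su; apply: nesym.
have [l bad_w] := bad_coordinate_exists Xw Xu wu.
by rewrite (bad_coordinates_eq Xu Xw (nesym wu) bad_u bad_w)
           (bad_coordinates_eq Xu Xw (nesym wu) bad_v bad_w).
Qed.

End VirtuallyCentralCoordinates.

Theorem lemma3p5 (n : nat) (A : 'I_n -> AGroup)
  (H K : prodGroup A -> Prop) :
  internal_direct_product H K ->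
  finite_index (prod_set H K) (whole (G := prodGroup A)) ->
  (forall i, almost_stable_centralisers (A i)) ->
  ~ cyclic_subgroup H ->
  (exists X, IMC_generating_set H X) ->
  exists i : 'I_n, forall h : prodGroup A, H h ->
    forall j : 'I_n, j <> i -> virtual_centre (h j).
Proof.
move=> HK fiHK asc not_cyclic [X [XH [X_gen [X_indep X_maxc]]]].
have X_two := two_generators (proj1 HK) XH not_cyclic X_gen.
have [s [t [Xs [Xt st]]]] := X_two.
have [i bad_s] := bad_coordinate_exists HK XH X_indep Xs Xt st.
exists i => h Hh j ji.
apply: (virtual_centre_coord_of_generators HK fiHK XH (asc j) X_gen) => // v Xv.
apply: NNPP => bad_v; apply: ji.
exact: (bad_coordinate_unique HK fiHK XH X_indep X_maxc X_two Xv Xs bad_v bad_s).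
Qed.
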